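(* Let $T$ be a conservative ergodic invertible measure-preserving transformation of $(X,\mathcal B,\mu)$. If $T$ is subsequence weakly rationally ergodic and $S$ is an invertible nonsingular transformation with $ST=TS$, then $S$ is measure-preserving. In particular $T$ is not squashable.
   Context: $(X,\mathcal B,\mu)$ is a standard Borel space with nonatomic $\sigma$-finite measure. $S$ is invertible nonsingular if it is invertible, measurable, and $\mu(A)=0\iff\mu(SA)=0$. $T$ is squashable if it commutes with some invertible nonsingular $S$ that is not measure-preserving. For $F$ of positive finite measure, $u_k(F)=\mu(F\cap T^kF)/\mu(F)^2$, $a_n(F)=\sum_{k=0}^{n-1}u_k(F)$. $T$ is subsequence weakly rationally ergodic if there are a sequence $n_i\to\infty$ and a set $F$ of positive finite measure with $\mu(X\setminus\bigcup_{i\ge0}T^iF)=0$ such that for all measurable $A,B\subseteq F$, $\frac{1}{a_{n_i}(F)}\sum_{k=0}^{n_i-1}\mu(A\cap T^kB)\to\mu(A)\mu(B)$. *)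

From HB Require Import structures.
From mathcomp Require Import all_boot all_order all_algebra.
From mathcomp Require Import all_classical all_reals all_analysis.
Set Implicit Arguments. Unset Strict Implicit. Unset Printing Implicit Defensive.
Import Order.TTheory GRing.Theory Num.Theory.
Import numFieldNormedType.Exports.
Local Open Scope classical_set_scope.
Local Open Scope ring_scope.

Section Defs.
Context {R : realType} {d : measure_display} {X : measurableType d}.

(* Standard Borel space: Borel-isomorphic to a Borel subset of R
   (Kuratowski: every standard Borel space is, and conversely). *)
Definition standard_Borel : Prop :=
  exists (f : X -> R) (B : set R),
    measurable B /\ injective f /\ f @` setT = B /\
    measurable_fun setT f /\
    (forall A : set X, measurable A -> measurable (f @` A)).

Variable mu : {measure set X -> \bar R}.

Definition nonatomic : Prop :=
  forall A : set X, measurable A -> (0 < mu A)%E ->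
    exists B : set X, measurable B /\ B `<=` A /\ (0 < mu B)%E /\ (mu B < mu A)%E.

Definition invertible (S : X -> X) : Prop :=
  exists S' : X -> X, cancel S S' /\ cancel S' S /\
    measurable_fun setT S /\ measurable_fun setT S'.

Definition nonsingular (S : X -> X) : Prop :=
  invertible S /\
  forall A : set X, measurable A -> (mu A = 0%E <-> mu (S @` A) = 0%E).

Definition measure_preserving (S : X -> X) : Prop :=
  measurable_fun setT S /\
  forall A : set X, measurable A -> mu (S @^-1` A) = mu A.

Definition conservative (T : X -> X) : Prop :=
  forall W : set X, measurable W ->
    (forall n : nat, (0 < n)%N -> W `&` (iter n T) @^-1` W = set0) ->
    mu W = 0%E.

Definition ergodic (T : X -> X) : Prop :=
  forall A : set X, measurable A -> T @^-1` A = A ->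
    mu A = 0%E \/ mu (~` A) = 0%E.

Definition squashable (T : X -> X) : Prop :=
  exists S : X -> X, nonsingular S /\ S \o T = T \o S /\ ~ measure_preserving S.

Definition u_k (T : X -> X) (F : set X) (k : nat) : R :=
  fine (mu (F `&` (iter k T) @` F)) / (fine (mu F)) ^+ 2.

Definition a_n (T : X -> X) (F : set X) (n : nat) : R :=
  \sum_(0 <= k < n) u_k T F k.

Definition subsequence_weakly_rationally_ergodic (T : X -> X) : Prop :=
  exists (n : nat -> nat) (F : set X),
    (forall M : nat, exists i0, forall i, (i0 <= i)%N -> (M <= n i)%N) /\
    measurable F /\ (0 < mu F)%E /\ (mu F < +oo)%E /\
    mu (~` \bigcup_(i in setT) (iter i T) @` F) = 0%E /\
    forall A B : set X, measurable A -> measurable B -> A `<=` F -> B `<=` F ->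
      (fun i => (a_n T F (n i))^-1 *
          \sum_(0 <= k < n i) fine (mu (A `&` (iter k T) @` B)))
        @ \oo --> fine (mu A) * fine (mu B).

End Defs.

From HB Require Import structures.
From mathcomp Require Import all_boot all_order all_algebra.
From mathcomp Require Import all_classical all_reals all_analysis.
From mathcomp Require Import lra.

(* The measure
   [rho A := mu (S A)] is [T]-invariant and absolutely continuous with respect
   to [mu].  Since [F] sweeps out, [S F] meets some [T^i F] with positive
   measure, so [D := F ∩ (T^-i S)^-1 F] is not null; on [D] the map [T^-i S]
   carries [rho] to [mu] and lands in [F], and it commutes with [T].  Hence on
   [D] the measure [rho] obeys the same rational ergodic asymptotics, with the
   same normalisation [a_n(F)], as [mu].  Comparing these asymptotics on a Hahn
   layer of [D] where [d rho / d mu] lies in [[c, c + dl]] shows that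
   [rho / mu] is within [(c + dl) / c] of [1] on all of [D], so [rho = mu] on
   [D].  Ergodicity spreads the agreement to all of [X], and then
   [mu (S^-1 A) = rho (S^-1 A) = mu A]. *)

Set Implicit Arguments. Unset Strict Implicit. Unset Printing Implicit Defensive.
Import Order.TTheory GRing.Theory Num.Theory.
Import numFieldNormedType.Exports.
Local Open Scope classical_set_scope.
Local Open Scope ring_scope.

Section iterates.
Context {T : Type} (f g : T -> T).

Lemma image_cancel (A : set T) : cancel f g -> cancel g f -> f @` A = g @^-1` A.
Proof.
move=> fg gf; apply/seteqP; split => x.
- by case=> y Ay <-; rewrite /preimage /= fg.
- by move=> Agx; exists (g x) => //; rewrite gf.
Qed.

Lemma iter_cancel : cancel f g -> forall n, cancel (iter n f) (iter n g).
Proof. by move=> fg; elim => //= n IH x; rewrite iterSr fg IH. Qed.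

Lemma iter_commute : (forall x, f (g x) = g (f x)) ->
  forall n x, iter n f (g x) = g (iter n f x).
Proof. by move=> fg; elim => //= n IH x; rewrite IH fg. Qed.

End iterates.

Section measurable_maps.
Context d d' (X : measurableType d) (Y : measurableType d').

Lemma measurable_preimageT (f : X -> Y) (A : set Y) :
  measurable_fun setT f -> measurable A -> measurable (f @^-1` A).
Proof. by move=> mf mA; rewrite -[_ @^-1` _]setTI; exact: mf. Qed.

Lemma measurable_fun_iter (f : X -> X) :
  measurable_fun setT f -> forall n, measurable_fun setT (iter n f).
Proof.
by move=> mf; elim => [|n IH] /=; [exact: measurable_id|exact: measurableT_comp].
Qed.

End measurable_maps.

(* [pushforward mu f] is a measure only given [measurable_fun setT f]; the
   extra argument makes that proof, hence the instance, inferable. *)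
Section pushforward_measure.
Local Open Scope ereal_scope.
Context d (X : measurableType d) (R : realType) (mu : {measure set X -> \bar R}).
Context (f : X -> X) (mf : measurable_fun setT f).

Definition pushforwardm of measurable_fun setT f := pushforward mu f.

Let pushforwardm0 : pushforwardm mf set0 = 0.
Proof. by rewrite /pushforwardm /pushforward preimage_set0 measure0. Qed.

Let pushforwardm_ge0 A : 0 <= pushforwardm mf A.
Proof. exact: measure_ge0. Qed.

Let pushforwardm_sigma_additive : semi_sigma_additive (pushforwardm mf).
Proof.
move=> F mF tF mUF; rewrite /pushforwardm /pushforward preimage_bigcup.
apply: measure_semi_sigma_additive.
- by move=> n; exact: measurable_preimageT.
- apply/trivIsetP => /= i j _ _ ij; rewrite -preimage_setI.
  by move/trivIsetP : tF => /(_ _ _ _ _ ij) ->//; rewrite preimage_set0.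
- by rewrite -preimage_bigcup; exact: measurable_preimageT.
Qed.

HB.instance Definition _ := isMeasure.Build _ _ _ (pushforwardm mf)
  pushforwardm0 pushforwardm_ge0 pushforwardm_sigma_additive.

End pushforward_measure.

Section measure_facts.
Context d (X : measurableType d) (R : realType).
Implicit Types (nu : {measure set X -> \bar R}) (D E F : set X).

Lemma measure_sub_fin_num nu D E : measurable D -> (nu D < +oo)%E ->
  measurable E -> E `<=` D -> nu E \is a fin_num.
Proof.
by move=> mD nuD mE ED; rewrite ge0_fin_numE// (le_lt_trans _ nuD)// le_measure// inE.
Qed.

Lemma fine_measure_le nu D E F : measurable D -> (nu D < +oo)%E ->
  measurable E -> measurable F -> E `<=` F -> F `<=` D -> fine (nu E) <= fine (nu F).
Proof.
move=> mD nuD mE mF EF FD; apply: fine_le.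
- exact: measure_sub_fin_num nuD mE (subset_trans EF FD).
- exact: measure_sub_fin_num nuD mF FD.
- by rewrite le_measure // inE.
Qed.

Lemma measure_eq0_fine_le0 nu D E : measurable D -> (nu D < +oo)%E ->
  measurable E -> E `<=` D -> fine (nu E) <= 0 -> nu E = 0%E.
Proof.
move=> mD nuD mE ED nuE; apply/eqP; rewrite -fine_eq0.
  by rewrite eq_le nuE fine_ge0.
exact: measure_sub_fin_num nuD mE ED.
Qed.

Lemma preserving_iter nu (f : X -> X) : measurable_fun setT f ->
  (forall A, measurable A -> nu (f @^-1` A) = nu A) ->
  forall n A, measurable A -> nu (iter n f @^-1` A) = nu A.
Proof.
move=> mf hf; elim => // n IH A mA.
by rewrite iterfS comp_preimage IH ?hf //; exact: measurable_preimageT.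
Qed.

End measure_facts.

Section hahn_split.
Context d (X : measurableType d) (R : realType).
Variables (mu rho : {measure set X -> \bar R}) (D : set X).
Hypotheses (mD : measurable D) (muD : (mu D < +oo)%E) (rhoD : (rho D < +oo)%E).

Lemma hahn_split c : exists P, [/\ measurable P, P `<=` D,
    (forall E, measurable E -> E `<=` P -> c * fine (mu E) <= fine (rho E)) &
    (forall E, measurable E -> E `<=` D `\` P -> fine (rho E) <= c * fine (mu E))].
Proof.
pose nu := cadd (charge_of_finite_measure (mfrestr mD rhoD))
   (cscale (- c) (charge_of_finite_measure (mfrestr mD muD))).
have [P [N [[mP posP] [mN negN] PN _]]] := Hahn_decomposition nu.
have nuE E : measurable E -> E `<=` D ->
    nu E = ((fine (rho E) - c * fine (mu E))%:E)%E.
  move=> mE ED; rewrite /nu /cadd /cscale /= /mfrestr /mrestr /cscale /=.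
  rewrite /mfrestr /mrestr !(setIidl ED).
  rewrite -(fineK (measure_sub_fin_num mD muD mE ED)).
  rewrite -(fineK (measure_sub_fin_num mD rhoD mE ED)) /=.
  by rewrite EFinB EFinM EFinN mulNe.
exists (P `&` D); split => [||E mE EP|E mE EDP].
- exact: measurableI.
- exact: subIsetr.
- have ED : E `<=` D by move=> x /EP[].
  rewrite -subr_ge0 -lee_fin -nuE //.
  exact: posP E mE (fun x Ex => (EP x Ex).1).
- have ED : E `<=` D by move=> x /EDP[].
  have EN : E `<=` N.
    move=> x /EDP[Dx nPDx]; have : (P `|` N) x by rewrite PN.
    by case=> // Px; exfalso; exact: nPDx.
  rewrite -subr_le0 -lee_fin -nuE //.
  exact: negN E mE EN.
Qed.

End hahn_split.

Lemma ratio_squeeze (R : realType) (x y c0 : R) : 0 <= x -> 0 <= y -> 0 < c0 ->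
  (forall dl, 0 < dl -> exists c,
     [/\ c0 <= c, c * x <= (c + dl) * y & c * y <= (c + dl) * x]) ->
  x = y.
Proof.
move=> x0 y0 c00 H.
have side a b : 0 <= a -> 0 <= b ->
    (forall dl, 0 < dl -> exists c, c0 <= c /\ c * b <= (c + dl) * a) -> b <= a.
  move=> a0 b0 Hab; rewrite leNgt; apply/negP => ab.
  pose t := (b - a) / (2 * (a + 1)).
  have t0 : 0 < t by rewrite /t divr_gt0 // ?subr_gt0 //; lra.
  have tE : t * (2 * (a + 1)) = b - a by rewrite /t mulfVK //; apply/lt0r_neq0; lra.
  have [c [cc0 hc]] := Hab (c0 * t) (mulr_gt0 c00 t0).
  nra.
apply/eqP; rewrite eq_le; apply/andP; split; apply: side => // dl /H [c [? ? ?]];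
  by exists c.
Qed.

Section asymptotic_agreement.
Context d (X : measurableType d) (R : realType).
Variables (mu rho : {measure set X -> \bar R}) (D : set X).
Hypotheses (mD : measurable D) (muD : (mu D < +oo)%E) (rhoD : (rho D < +oo)%E).
Hypothesis rho_dom : forall E, measurable E -> E `<=` D -> mu E = 0%E -> rho E = 0%E.
Hypothesis rhoD_gt0 : (0 < rho D)%E.
Variables (shift : nat -> set X -> set X) (weight : nat -> R) (len : nat -> nat).
Hypothesis mshift : forall k A, measurable A -> measurable (shift k A).
Hypothesis weight_ge0 : forall i, 0 <= weight i.
Hypothesis mu_asymp : forall A B, measurable A -> measurable B -> A `<=` D -> B `<=` D ->
   (fun i => weight i * \sum_(0 <= k < len i) fine (mu (B `&` shift k A))) @ \oo -->
     fine (mu B) * fine (mu A).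
Hypothesis rho_asymp : forall A B, measurable A -> measurable B -> A `<=` D -> B `<=` D ->
   (fun i => weight i * \sum_(0 <= k < len i) fine (rho (B `&` shift k A))) @ \oo -->
     fine (rho B) * fine (rho A).

Definition density_band c dl B := forall E, measurable E -> E `<=` B ->
  c * fine (mu E) <= fine (rho E) /\ fine (rho E) <= (c + dl) * fine (mu E).

(* Comparing the asymptotics for the pairs [(A, B)] term by term gives
   [c mu(B) mu(A) <= rho(B) rho(A) <= (c + dl) mu(B) mu(A)]; divide by
   [mu(B) ~ rho(B) / c]. *)
Lemma density_band_ratio B c dl : measurable B -> B `<=` D -> 0 < fine (mu B) ->
  0 < c -> 0 < dl -> density_band c dl B ->
  forall A, measurable A -> A `<=` D ->
  c * fine (mu A) <= (c + dl) * fine (rho A) /\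
  c * fine (rho A) <= (c + dl) * fine (mu A).
Proof.
move=> mB BD muB c0 dl0 hB A mA AD.
have hmu := mu_asymp mA mB AD BD.
have hrho := rho_asymp mA mB AD BD.
have band k := hB (B `&` shift k A) (measurableI _ _ mB (mshift k mA)) (@subIsetl _ _ _).
have lower : c * (fine (mu B) * fine (mu A)) <= fine (rho B) * fine (rho A).
  apply: (ler_cvg_to (cvgMl_tmp (a := c) hmu) hrho); apply: nearW => i.
  rewrite mulrA (mulrC c) -mulrA; apply: ler_wpM2l => //.
  by rewrite mulr_sumr; apply: ler_sum => k _; case: (band k).
have upper : fine (rho B) * fine (rho A) <= (c + dl) * (fine (mu B) * fine (mu A)).
  apply: (ler_cvg_to hrho (cvgMl_tmp (a := c + dl) hmu)); apply: nearW => i.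
  rewrite mulrA (mulrC (c + dl)) -mulrA; apply: ler_wpM2l => //.
  by rewrite mulr_sumr; apply: ler_sum => k _; case: (band k).
have [b1 b2] := hB B mB (@subset_refl _ B).
have muA0 : 0 <= fine (mu A) by apply: fine_ge0.
have rhoA0 : 0 <= fine (rho A) by apply: fine_ge0.
split; nra.
Qed.

Lemma hahn_positive_part_gt0 c0 P : 0 < c0 -> c0 * fine (mu D) < fine (rho D) ->
  measurable P -> P `<=` D ->
  (forall E, measurable E -> E `<=` D `\` P -> fine (rho E) <= c0 * fine (mu E)) ->
  0 < fine (mu P).
Proof.
move=> c00 hc mP PD hDP; rewrite ltNge; apply/negP => muP.
have rhoP := rho_dom mP PD (measure_eq0_fine_le0 mD muD mP PD muP).
have mDP : measurable (D `\` P) by exact: measurableD.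
have rhoDP : fine (rho D) = fine (rho (D `\` P)).
  rewrite (measureDI rho mD mP) (setIidr PD) -[in RHS](adde0 (rho _)).
  by congr (fine (_ + _)).
have := hDP _ mDP (@subset_refl _ _).
have : fine (mu (D `\` P)) <= fine (mu D) by apply: fine_measure_le muD _ _ _ _.
have : 0 <= fine (mu (D `\` P)) by apply: fine_ge0.
nra.
Qed.

(* The Hahn sets [P j] of [rho - (c0 + j dl) mu] cannot all differ by null
   sets from [P 0]: that would force [rho(P 0) >= (c0 + j dl) mu(P 0)] for
   every [j], although [mu(P 0) > 0]. *)
Lemma exists_density_band c0 dl : 0 < c0 -> c0 * fine (mu D) < fine (rho D) ->
  0 < dl -> exists c B, [/\ c0 <= c, measurable B, B `<=` D, 0 < fine (mu B) &
    density_band c dl B].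
Proof.
move=> c00 hc0 dl0.
pose cj (j : nat) := c0 + j%:R * dl.
have [P hP] := choice (fun j => hahn_split mD muD rhoD (cj j)).
have mP j : measurable (P j) by have [] := hP j.
have PD j : P j `<=` D by have [] := hP j.
have cj0 j : c0 <= cj j by rewrite /cj lerDl mulr_ge0 // ltW.
have mband j : measurable (P j `\` P j.+1) by exact: measurableD.
have bandD j : P j `\` P j.+1 `<=` D by move=> x [/PD].
suff [j hj] : exists j, 0 < fine (mu (P j `\` P j.+1)).
  exists (cj j), (P j `\` P j.+1); split => // E mE EB; split.
    by have [_ _ h _] := hP j; apply: h => // x /EB[].
  have [_ _ _ h] := hP j.+1.
  have -> : cj j + dl = cj j.+1 by rewrite /cj -nat1r mulrDl mul1r; lra.
  by apply: h => // x /EB[/PD ? ?].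
apply/not_existsP => hn.
have null_band j : mu (P j `\` P j.+1) = 0%E.
  by apply: measure_eq0_fine_le0 mD muD _ _ _ => //; rewrite leNgt; apply/negP.
have null_diff j : mu (P 0 `\` P j) = 0%E.
  elim: j => [|j IH]; first by rewrite setDv measure0.
  apply: (subset_measure0 (B := (P 0 `\` P j) `|` (P j `\` P j.+1))).
  - exact: measurableD.
  - by apply: measurableU; exact: measurableD.
  - by move=> x [P0x nPx]; have [Px|nPjx] := pselect (P j x); [right|left].
  - by apply: null_set_setU => //; exact: measurableD.
have muP0 : 0 < fine (mu (P 0)).
  have [_ _ _ h] := hP 0.
  apply: (hahn_positive_part_gt0 c00 hc0 (mP 0) (PD 0)) => E mE EP.
  by have := h E mE EP; rewrite /cj mul0r addr0.
pose j := Num.Def.archi_bound (fine (rho D) / (dl * fine (mu (P 0)))).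
have hj : fine (rho D) / (dl * fine (mu (P 0))) < j%:R.
  by apply: archi_boundP; rewrite divr_ge0 // ?mulr_ge0 // ltW.
have mI : measurable (P 0 `&` P j) by exact: measurableI.
have muI : fine (mu (P 0)) = fine (mu (P 0 `&` P j)).
  rewrite (measureDI mu (mP 0) (mP j)) -[in RHS](add0e (mu _)).
  by congr (fine (_ + _)); exact: null_diff.
have [_ _ h _] := hP j.
have lower := h _ mI (@subIsetr _ _ _).
have upper : fine (rho (P 0 `&` P j)) <= fine (rho D).
  exact: fine_measure_le rhoD mI mD (subset_trans (@subIsetl _ _ _) (PD 0)) _.
rewrite -muI /cj in lower.
have dm0 : 0 < dl * fine (mu (P 0)) by rewrite mulr_gt0.
have hj' : fine (rho D) < j%:R * (dl * fine (mu (P 0))) by rewrite -ltr_pdivrMr.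
have : 0 <= c0 * fine (mu (P 0)) by rewrite mulr_ge0 // ltW.
nra.
Qed.

Lemma asymptotic_measures_agree A : measurable A -> A `<=` D -> rho A = mu A.
Proof.
move=> mA AD.
have rhoD_fin := measure_sub_fin_num mD rhoD mD (@subset_refl _ D).
have muD_fin := measure_sub_fin_num mD muD mD (@subset_refl _ D).
have rhoD_pos : 0 < fine (rho D) by apply: fine_gt0; rewrite rhoD_gt0 rhoD.
have muD_pos : 0 < fine (mu D).
  rewrite lt0r fine_ge0 // andbT fine_eq0 //; apply/negP => /eqP /(rho_dom mD).
  by move/(_ (@subset_refl _ D)) => rhoD0; move: rhoD_gt0; rewrite rhoD0 ltxx.
pose c0 := fine (rho D) / (2 * fine (mu D)).
have c00 : 0 < c0 by rewrite /c0 divr_gt0 // mulr_gt0.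
have c0E : c0 * (2 * fine (mu D)) = fine (rho D).
  by rewrite /c0 mulfVK //; apply/lt0r_neq0; rewrite mulr_gt0.
have hc0 : c0 * fine (mu D) < fine (rho D) by nra.
rewrite -(fineK (measure_sub_fin_num mD muD mA AD)).
rewrite -(fineK (measure_sub_fin_num mD rhoD mA AD)); congr EFin.
apply/esym/(ratio_squeeze (fine_ge0 (measure_ge0 mu A)) (fine_ge0 (measure_ge0 rho A)) c00).
move=> dl dl0; have [c [B [cc0 mB BD muB hB]]] := exists_density_band c00 hc0 dl0.
have [? ?] := density_band_ratio mB BD muB (lt_le_trans c00 cc0) dl0 hB mA AD.
by exists c.
Qed.

End asymptotic_agreement.

Section agreement.
Context d (X : measurableType d) (R : realType).
Implicit Types (rho mu : {measure set X -> \bar R}).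

Definition agree_on rho mu (E0 : set X) :=
  forall E, measurable E -> E `<=` E0 -> rho E = mu E.

Lemma agree_on_bigcup rho mu (V : nat -> set X) :
  (forall n, measurable (V n)) -> (forall n, agree_on rho mu (V n)) ->
  agree_on rho mu (\bigcup_n V n).
Proof.
move=> mV agV E mE EV.
pose F n := E `&` V n.
have mF n : measurable (F n) by exact: measurableI.
have EF : E = \bigcup_k seqDU F k.
  by rewrite -seqDU_bigcup_eq /F -setI_bigcupr; apply/esym/setIidl.
have sub k : seqDU F k `<=` V k by move=> x /(@subset_seqDU _ F k) [].
have mseqDU := seqDU_measurable mF.
have tseqDU := @trivIset_seqDU _ F.
by rewrite EF !measure_bigcup //; apply: eq_eseriesr => k _; apply: agV.
Qed.

Lemma agree_on_preimage rho mu (f g : X -> X) (E0 : set X) :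
  cancel f g -> cancel g f -> measurable_fun setT g ->
  (forall A, measurable A -> rho (f @^-1` A) = rho A) ->
  (forall A, measurable A -> mu (f @^-1` A) = mu A) ->
  agree_on rho mu E0 -> agree_on rho mu (f @^-1` E0).
Proof.
move=> fg gf mg rhof muf agE E mE EE0.
have -> : E = f @^-1` (g @^-1` E) by apply/seteqP; split => x /=; rewrite fg.
have mgE : measurable (g @^-1` E) by exact: measurable_preimageT.
rewrite rhof // muf // agE //.
by move=> x /= /EE0; rewrite /preimage /= gf.
Qed.

Lemma agree_on_iter_preimage rho mu (f g : X -> X) :
  cancel f g -> cancel g f -> measurable_fun setT g ->
  (forall A, measurable A -> rho (f @^-1` A) = rho A) ->
  (forall A, measurable A -> mu (f @^-1` A) = mu A) ->
  forall n E0, agree_on rho mu E0 -> agree_on rho mu (iter n f @^-1` E0).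
Proof.
move=> fg gf mg rhof muf; elim => // n IH E0 agE.
by rewrite iterfS comp_preimage; apply: IH; exact: agree_on_preimage agE.
Qed.

End agreement.

Lemma a_n_ge0 (R : realType) d (X : measurableType d)
    (mu : {measure set X -> \bar R}) T F N : 0 <= a_n mu T F N.
Proof.
apply: sumr_ge0 => k _; rewrite /u_k.
by apply: divr_ge0; [exact: fine_ge0|exact: exprn_ge0 (fine_ge0 _)].
Qed.

Section invertible_transformation.
Context d (X : measurableType d) (R : realType).
Variables T T' : X -> X.
Hypotheses (cTT' : cancel T T') (cT'T : cancel T' T).
Hypotheses (mT : measurable_fun setT T) (mT' : measurable_fun setT T').

Lemma iter_image n A : iter n T @` A = iter n T' @^-1` A.
Proof. exact: image_cancel (iter_cancel cTT' n) (iter_cancel cT'T n). Qed.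

Lemma measurable_iter_image n A : measurable A -> measurable (iter n T @` A).
Proof.
by rewrite iter_image; apply: measurable_preimageT; exact: measurable_fun_iter.
Qed.

Lemma preserving_inverse (nu : {measure set X -> \bar R}) :
  (forall A, measurable A -> nu (T @^-1` A) = nu A) ->
  forall A, measurable A -> nu (T' @^-1` A) = nu A.
Proof.
move=> nuT A mA; rewrite -nuT; last exact: measurable_preimageT.
by congr (nu _); apply/seteqP; split => x; rewrite /preimage /= cTT'.
Qed.

Lemma sweep_out_meets (mu : {measure set X -> \bar R}) F E :
  measurable F -> measurable E ->
  mu (~` \bigcup_(k in setT) iter k T @` F) = 0%E -> (0 < mu E)%E ->
  exists i, (0 < mu (E `&` iter i T' @^-1` F))%E.
Proof.
move=> mF mE sweep muE; apply/not_existsP => hn.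
have null j : mu (E `&` iter j T' @^-1` F) = 0%E.
  by apply/eqP; rewrite -measure_le0 leNgt; apply/negP; exact: hn.
pose G j := if j is j'.+1 then E `&` iter j' T' @^-1` F
            else ~` \bigcup_(k in setT) iter k T @` F.
have mG j : measurable (G j).
  case: j => [|j] /=.
    by apply/measurableC/bigcup_measurable => k _; exact: measurable_iter_image.
  by apply: measurableI => //; apply: measurable_preimageT => //; exact: measurable_fun_iter.
suff : mu E = 0%E by move=> E0; rewrite E0 ltxx in muE.
apply/eqP; rewrite -measure_le0.
apply: (le_trans (measure_sigma_subadditive _ mG mE _)).
  move=> x Ex; have [[k _ Fk]|nUx] := pselect ((\bigcup_(k in setT) iter k T @` F) x).
    by exists k.+1 => //; split => //; rewrite -iter_image.
  by exists 0%N.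
by rewrite eseries0 // => -[|j] _ _ /=; [exact: sweep|exact: null].
Qed.

Lemma ergodic_agree (mu rho : {measure set X -> \bar R}) D : ergodic mu T ->
  (forall A, measurable A -> mu (T @^-1` A) = mu A) ->
  (forall A, measurable A -> rho (T @^-1` A) = rho A) ->
  (forall A, measurable A -> mu A = 0%E -> rho A = 0%E) ->
  measurable D -> mu D <> 0%E -> agree_on rho mu D ->
  forall A, measurable A -> rho A = mu A.
Proof.
move=> erg muT rhoT rho_dom mD muD agD.
pose W := \bigcup_m iter m T @^-1` D.
pose U := \bigcup_k iter k T' @^-1` W.
have mW : measurable W.
  by apply: bigcup_measurable => m _; apply: measurable_preimageT => //;
    exact: measurable_fun_iter.
have mU : measurable U.
  by apply: bigcup_measurable => k _; apply: measurable_preimageT => //;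
    exact: measurable_fun_iter.
have agW : agree_on rho mu W.
  apply: agree_on_bigcup => m.
    by apply: measurable_preimageT => //; exact: measurable_fun_iter.
  exact: agree_on_iter_preimage cTT' cT'T mT' rhoT muT m D agD.
have agU : agree_on rho mu U.
  apply: agree_on_bigcup => k.
    by apply: measurable_preimageT => //; exact: measurable_fun_iter.
  exact: agree_on_iter_preimage cT'T cTT' mT
    (preserving_inverse rhoT) (preserving_inverse muT) k W agW.
have TU : T @^-1` U = U.
  apply/seteqP; split => x /=.
  - case=> -[|k] _ [m _ hm] /=.
      by exists 0%N => //; exists m.+1 => //=; move: hm; rewrite /preimage /= -iterSr.
    exists k => //; exists m => //; move: hm; rewrite /preimage /=.
    by rewrite -[T' (iter k T' (T x))]/(iter k.+1 T' (T x)) iterSr cTT'.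
  - case=> k _ [m _ hm]; exists k.+1 => //; exists m => //.
    by rewrite /preimage /= -[T' (iter k T' (T x))]/(iter k.+1 T' (T x)) iterSr cTT'.
have DU : D `<=` U by move=> x Dx; exists 0%N => //; exists 0%N.
have muU : mu (~` U) = 0%E.
  by case: (erg U mU TU) => // /(subset_measure0 mD mU DU).
have rhoU : rho (~` U) = 0%E by apply: rho_dom => //; exact: measurableC.
move=> A mA.
have mAU : measurable (A `\` U) by exact: measurableD.
have AUC : A `\` U `<=` ~` U by move=> x [].
have rhoAU : rho (A `\` U) = 0%E := subset_measure0 mAU (measurableC mU) AUC rhoU.
have muAU : mu (A `\` U) = 0%E := subset_measure0 mAU (measurableC mU) AUC muU.
have rhoA : rho A = (rho (A `\` U) + rho (A `&` U))%E := measureDI rho mA mU.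
have muA : mu A = (mu (A `\` U) + mu (A `&` U))%E := measureDI mu mA mU.
rewrite rhoA muA rhoAU muAU !add0e.
by apply: agU; [exact: measurableI|exact: subIsetr].
Qed.

End invertible_transformation.

Section commuting_transformation.
Context d (X : measurableType d) (R : realType) (mu : {measure set X -> \bar R}).
Variables T T' S S' : X -> X.
Hypotheses (cTT' : cancel T T') (cT'T : cancel T' T).
Hypotheses (cSS' : cancel S S') (cS'S : cancel S' S).
Hypotheses (mT : measurable_fun setT T) (mT' : measurable_fun setT T').
Hypotheses (mS : measurable_fun setT S) (mS' : measurable_fun setT S').
Hypothesis Tpres : forall A, measurable A -> mu (T @^-1` A) = mu A.
Hypothesis ST : forall x, S (T x) = T (S x).
Hypothesis S_null : forall A, measurable A -> mu A = 0%E <-> mu (S @` A) = 0%E.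

Let rho : {measure set X -> \bar R} := pushforwardm mu mS'.

Let rhoE A : rho A = mu (S' @^-1` A).
Proof. by []. Qed.

Let rho_image A : rho A = mu (S @` A).
Proof. by rewrite rhoE (image_cancel _ cSS' cS'S). Qed.

Let rho_dom A : measurable A -> mu A = 0%E -> rho A = 0%E.
Proof. by move=> mA /(S_null mA); rewrite rho_image. Qed.

Let S'T x : S' (T x) = T (S' x).
Proof. by rewrite -{1}[x]cS'S -ST cSS'. Qed.

Let T'S' x : T' (S' x) = S' (T' x).
Proof. by apply: (can_inj cTT'); rewrite cT'T -S'T cT'T. Qed.

Let rhoT A : measurable A -> rho (T @^-1` A) = rho A.
Proof.
move=> mA; rewrite !rhoE.
have -> : S' @^-1` (T @^-1` A) = T @^-1` (S' @^-1` A).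
  by apply/seteqP; split => x; rewrite /preimage /= S'T.
by rewrite Tpres //; exact: measurable_preimageT.
Qed.

Section return_set.
Variables (F : set X) (n : nat -> nat) (i : nat).
Hypotheses (mF : measurable F) (Foo : (mu F < +oo)%E).
Hypothesis swre : forall A B, measurable A -> measurable B -> A `<=` F -> B `<=` F ->
  (fun j => (a_n mu T F (n j))^-1 *
     \sum_(0 <= k < n j) fine (mu (A `&` iter k T @` B))) @ \oo -->
  fine (mu A) * fine (mu B).
Hypothesis S_return : (0 < mu (S' @^-1` F `&` iter i T' @^-1` F))%E.

(* [V'] is the inverse of [T^-i S]; on [D] the map [T^-i S] carries [rho]
   onto [mu] and lands in [F], where the rational ergodicity of [T] lives. *)
Let V' := S' \o iter i T.
Let D := F `&` (iter i T' \o S) @^-1` F.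

Let mV' : measurable_fun setT V'.
Proof. exact: measurableT_comp mS' (measurable_fun_iter mT i). Qed.

Let mD : measurable D.
Proof.
apply: measurableI => //; apply: measurable_preimageT => //.
exact: measurableT_comp (measurable_fun_iter mT' i) mS.
Qed.

Let rhoV' A : measurable A -> rho A = mu (V' @^-1` A).
Proof.
move=> mA; rewrite rhoE /V' comp_preimage.
by rewrite (preserving_iter mT Tpres) //; exact: measurable_preimageT.
Qed.

Let V'_sub A : A `<=` D -> V' @^-1` A `<=` F.
Proof. by move=> AD y /AD [_] /=; rewrite cS'S (iter_cancel cTT'). Qed.

Let V'_shift k A B : V' @^-1` (B `&` iter k T @` A) =
  V' @^-1` B `&` iter k T @` (V' @^-1` A).
Proof.
have T'V' x : T' (V' x) = V' (T' x).
  rewrite /V' /= T'S' (@iter_commute _ T T') // => y.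
  by rewrite cT'T cTT'.
rewrite !(iter_image cTT' cT'T) preimage_setI; congr (_ `&` _).
by apply/seteqP; split => x; rewrite /preimage /= (iter_commute T'V').
Qed.

Let rho_asymp A B : measurable A -> measurable B -> A `<=` D -> B `<=` D ->
  (fun j => (a_n mu T F (n j))^-1 *
     \sum_(0 <= k < n j) fine (rho (B `&` iter k T @` A))) @ \oo -->
  fine (rho B) * fine (rho A).
Proof.
move=> mA mB AD BD; rewrite (rhoV' mA) (rhoV' mB).
have shiftE k : rho (B `&` iter k T @` A) =
    mu (V' @^-1` B `&` iter k T @` (V' @^-1` A)).
  by rewrite rhoV' ?V'_shift //; apply: measurableI => //; exact: measurable_iter_image.
under eq_fun do under eq_bigr do rewrite shiftE.
by apply: swre; [exact: measurable_preimageT mV' mB|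
  exact: measurable_preimageT mV' mA|exact: V'_sub|exact: V'_sub].
Qed.

Let rhoD_gt0 : (0 < rho D)%E.
Proof.
rewrite rhoE (lt_le_trans S_return) // le_measure ?inE //.
- apply: measurableI; apply: measurable_preimageT => //.
  exact: measurable_fun_iter.
- exact: measurable_preimageT.
- by move=> y [/= Fy Fiy]; split => //=; rewrite cS'S.
Qed.

Let rho_agree_on_D : agree_on rho mu D.
Proof.
have DF : D `<=` F by move=> x [].
move=> A mA AD.
apply: (@asymptotic_measures_agree _ _ _ mu rho D _ _ _ _ _
  (fun k A => iter k T @` A) (fun j => (a_n mu T F (n j))^-1) n) => //.
- by rewrite (le_lt_trans _ Foo) // le_measure ?inE.
- rewrite rhoV' // (le_lt_trans _ Foo) // le_measure ?inE //.
    exact: measurable_preimageT.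
  exact: V'_sub.
- by move=> E mE _; exact: rho_dom.
- by move=> k A' mA'; exact: measurable_iter_image.
- by move=> j; rewrite invr_ge0 a_n_ge0.
by move=> A' B' mA' mB' A'D B'D; apply: swre => //;
  [exact: subset_trans B'D DF|exact: subset_trans A'D DF].
Qed.

Lemma commuting_return_preserving : ergodic mu T ->
  forall A, measurable A -> mu (S @^-1` A) = mu A.
Proof.
move=> erg A mA.
have muD0 : mu D <> 0%E.
  by move=> /(rho_dom mD) rhoD0; move: rhoD_gt0; rewrite rhoD0 ltxx.
have rho_mu := ergodic_agree cTT' cT'T mT mT' erg Tpres rhoT rho_dom mD muD0 rho_agree_on_D.
have -> : mu A = rho (S @^-1` A).
  by rewrite rhoE; congr (mu _); apply/seteqP; split => x; rewrite /preimage /= cS'S.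
by rewrite rho_mu //; exact: measurable_preimageT.
Qed.

End return_set.
Lemma commuting_preserving F n : ergodic mu T ->
  measurable F -> (0 < mu F)%E -> (mu F < +oo)%E ->
  mu (~` \bigcup_(k in setT) iter k T @` F) = 0%E ->
  (forall A B, measurable A -> measurable B -> A `<=` F -> B `<=` F ->
    (fun j => (a_n mu T F (n j))^-1 *
       \sum_(0 <= k < n j) fine (mu (A `&` iter k T @` B))) @ \oo -->
    fine (mu A) * fine (mu B)) ->
  forall A, measurable A -> mu (S @^-1` A) = mu A.
Proof.
move=> erg mF muF Foo sweep swre.
have muSF : (0 < mu (S' @^-1` F))%E.
  rewrite lt0e measure_ge0 andbT -rhoE rho_image; apply/eqP => /(S_null mF) muF0.
  by move: muF; rewrite muF0 ltxx.
have [i Si] := sweep_out_meets cTT' cT'T mT' mF (measurable_preimageT mS' mF) sweep muSF.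
exact: commuting_return_preserving Foo swre Si erg.
Qed.

End commuting_transformation.

Theorem mainTheorem6 (R : realType) (d : measure_display) (X : measurableType d)
    (mu : {measure set X -> \bar R}) (T : X -> X) :
  @standard_Borel R d X ->
  sigma_finite setT mu ->
  nonatomic mu ->
  invertible T -> measure_preserving mu T ->
  conservative mu T -> ergodic mu T ->
  subsequence_weakly_rationally_ergodic mu T ->
  (forall S : X -> X, nonsingular mu S -> S \o T = T \o S ->
     measure_preserving mu S) /\
  ~ squashable mu T.
Proof.
move=> _ _ _ [T' [cTT' [cT'T [mT mT']]]] [_ Tpres] _ erg
  [n [F [_ [mF [muF [Foo [sweep swre]]]]]]].
have preserving S : nonsingular mu S -> S \o T = T \o S -> measure_preserving mu S.
  move=> [[S' [cSS' [cS'S [mS mS']]]] S_null] ST; split => //.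
  apply: (commuting_preserving cTT' cT'T cSS' cS'S mT mT' mS mS' Tpres _ S_null
    erg mF muF Foo sweep swre).
  by move=> x; exact: (congr1 (fun f => f x) ST).
by split => // -[S [nsS [ST notpres]]]; exact/notpres/preserving.
Qed.
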